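(* On $\mathcal{P}(\mathbb{R}^{2m},\mathbb{C})\cap\ker(\Delta_x,\Delta_u)$, equipped with the Fischer inner product, the adjoints of the operators $C,A,S_u,S_x$ are $C^\dagger=A$, $A^\dagger=C$, $S_u^\dagger=S_x$, $S_x^\dagger=S_u$; i.e. for all $P,Q\in\mathcal{P}(\mathbb{R}^{2m},\mathbb{C})\cap\ker(\Delta_x,\Delta_u)$: $[CP,Q]_F=[P,AQ]_F$, $[AP,Q]_F=[P,CQ]_F$, $[S_uP,Q]_F=[P,S_xQ]_F$, $[S_xP,Q]_F=[P,S_uQ]_F$.
   Context: Fix an integer $m>4$. For $x,u\in\mathbb{R}^m$ let $\mathcal{P}(\mathbb{R}^{2m},\mathbb{C})$ be the complex polynomials in $(x,u)$ and $\mathcal{P}_{p,q}$ those of bidegree $(p,q)$. The Fischer inner product is $[P,Q]_F=\overline{P}(\partial_x,\partial_u)Q(x,u)\big|_{x=u=0}$, where $\overline{P}(\partial_x,\partial_u)$ is obtained from $P$ by conjugating the coefficients and replacing each $x_j,u_j$ by $\partial_{x_j},\partial_{u_j}$. Write $|x|^2=\sum x_j^2$, $\langle u,x\rangle=\sum u_jx_j$, $\Delta_x=\sum\partial_{x_j}^2$, $\Delta_u=\sum\partial_{u_j}^2$, $\langle\partial_u,\partial_x\rangle=\sum\partial_{u_j}\partial_{x_j}$, $\langle x,\partial_u\rangle=\sum x_j\partial_{u_j}$, $\langle u,\partial_x\rangle=\sum u_j\partial_{x_j}$, $\ker(D_1,\dots,D_r)=\bigcap\ker D_i$. Every $P\in\mathcal{P}_{p,q}$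 is uniquely $\sum_{a,b\ge0}|x|^{2a}|u|^{2b}H'_{p-2a,q-2b}$ with $H'_{p-2a,q-2b}\in\mathcal{P}_{p-2a,q-2b}\cap\ker(\Delta_x,\Delta_u)$; $\pi_{\mathfrak{s}}P:=H'_{p,q}$. On $\ker(\Delta_x,\Delta_u)$: $S_x=\pi_{\mathfrak{s}}\langle x,\partial_u\rangle$, $S_u=\pi_{\mathfrak{s}}\langle u,\partial_x\rangle$, $A=\pi_{\mathfrak{s}}\langle\partial_u,\partial_x\rangle$, $C=\pi_{\mathfrak{s}}\langle u,x\rangle$. *)

From HB Require Import structures.
From mathcomp Require Import all_boot all_order all_algebra.
From mathcomp Require Import Rstruct complex.
From mathcomp Require Import mpoly.
From Stdlib Require Import ClassicalEpsilon.

Set Implicit Arguments.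
Unset Strict Implicit.
Unset Printing Implicit Defensive.
Import GRing.Theory Num.Theory.
Local Open Scope ring_scope.

Definition Cplx : numClosedFieldType := (Rdefinitions.R)[i].

(* Polynomials in (x,u) in R^m x R^m, complex coefficients: variables
   0..m-1 are x_1..x_m, variables m..2m-1 are u_1..u_m. *)
Definition Pol (m : nat) := {mpoly Cplx[m + m]}.

Section Ops.
Variable m : nat.

Definition xvar (j : 'I_m) : Pol m := 'X_(lshift m j).
Definition uvar (j : 'I_m) : Pol m := 'X_(rshift m j).
Definition dx (j : 'I_m) (P : Pol m) : Pol m := P^`M(lshift m j).
Definition du (j : 'I_m) (P : Pol m) : Pol m := P^`M(rshift m j).

Definition Lap_x (P : Pol m) : Pol m := \sum_(j < m) dx j (dx j P).
Definition Lap_u (P : Pol m) : Pol m := \sum_(j < m) du j (du j P).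

Definition biharmonic (P : Pol m) : Prop := Lap_x P = 0 /\ Lap_u P = 0.

Definition normx2 : Pol m := \sum_(j < m) xvar j ^+ 2.
Definition normu2 : Pol m := \sum_(j < m) uvar j ^+ 2.
Definition ux : Pol m := \sum_(j < m) uvar j * xvar j.

Definition x_du (P : Pol m) : Pol m := \sum_(j < m) xvar j * du j P.
Definition u_dx (P : Pol m) : Pol m := \sum_(j < m) uvar j * dx j P.
Definition du_dx (P : Pol m) : Pol m := \sum_(j < m) du j (dx j P).
Definition mul_ux (P : Pol m) : Pol m := ux * P.

Definition fischer_decomp (F H : Pol m) : Prop :=
  exists (N : nat) (Hf : nat -> nat -> Pol m),
    (forall a b, biharmonic (Hf a b)) /\ H = Hf 0%N 0%N /\
    F = \sum_(a < N.+1) \sum_(b < N.+1) normx2 ^+ a * normu2 ^+ b * Hf a b.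

Definition pi_s (F : Pol m) : Pol m :=
  epsilon (inhabits 0) (fun H => fischer_decomp F H).

Definition S_x (P : Pol m) : Pol m := pi_s (x_du P).
Definition S_u (P : Pol m) : Pol m := pi_s (u_dx P).
Definition A_op (P : Pol m) : Pol m := pi_s (du_dx P).
Definition C_op (P : Pol m) : Pol m := pi_s (mul_ux P).

(* Fischer inner product [P,Q]_F = conj(P)(d_x,d_u) Q |_{x=u=0}:
   P = sum_alpha c_alpha X^alpha acts as sum_alpha conj(c_alpha) d^alpha. *)
Definition fischer (P Q : Pol m) : Cplx :=
  meval (fun _ => 0)
    (\sum_(mon <- msupp P) (P@_mon)^* *: Q^`M[mon]).

End Ops.

From HB Require Import structures.
From mathcomp Require Import all_boot all_order all_algebra.
From mathcomp Require Import Rstruct complex.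
From mathcomp Require Import mpoly ssrcomplements.
From mathcomp Require Import zify.
From Stdlib Require Import ClassicalEpsilon.

Set Implicit Arguments.
Unset Strict Implicit.
Unset Printing Implicit Defensive.
Import GRing.Theory Num.Theory.
Local Open Scope ring_scope.

(* The Fischer product turns multiplication by a variable into the adjoint of
   differentiation in that variable: [X_i R, Q]_F = [R, d_i Q]_F.  Hence
   [|x|^2 R, Q]_F = [R, Delta_x Q]_F and [|u|^2 R, Q]_F = [R, Delta_u Q]_F
   vanish when Q is in ker(Delta_x, Delta_u), so [pi_s F, Q]_F = [F, Q]_F for
   such Q, and the four identities reduce to the adjointness of <u,x> and
   <d_u,d_x>, and of <u,d_x> and <x,d_u>.
   Since pi_s is defined by choice, the Fischer decomposition must also be
   shown to exist.  On polynomials of bounded degree, positivity of [,]_F and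
   the same adjointness show that ker(Delta_x, Delta_u) meets the image of
   (R1, R2) |-> |x|^2 R1 + |u|^2 R2 trivially, and that the image of the
   Laplacians meets the kernel of this map trivially; a rank count then
   splits every F as H + |x|^2 R1 + |u|^2 R2 with H harmonic and R1, R2 of
   lower degree, and induction on the degree finishes. *)

Lemma row_full_kermx_adds (F : fieldType) (n p : nat)
    (A : 'M[F]_(n, p)) (B : 'M[F]_(p, n)) :
    (forall v : 'rV_n, v *m A = 0 -> (v <= B)%MS -> v = 0) ->
    (forall w : 'rV_p, w *m B = 0 -> (w <= A)%MS -> w = 0) ->
  row_full (kermx A + B)%MS.
Proof.
move=> kerA_capB kerB_capA.
have rank_cap0 q r s (X : 'M[F]_(q, s)) (Y : 'M[F]_(r, s)) :
    (forall v : 'rV_s, (v <= X)%MS -> (v <= Y)%MS -> v = 0) ->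
  \rank (X :&: Y)%MS = 0%N.
  move=> XY; apply/eqP; rewrite mxrank_eq0; apply/rowV0P => v.
  by rewrite sub_capmx => /andP[/XY].
have rk_kerA_capB : \rank (kermx A :&: B)%MS = 0%N.
  by apply: rank_cap0 => v; rewrite sub_kermx => /eqP; apply: kerA_capB.
have rk_A_capkerB : \rank (A :&: kermx B)%MS = 0%N.
  by apply: rank_cap0 => v vA; rewrite sub_kermx => /eqP /kerB_capA; apply.
have rkAB : (\rank A <= \rank B)%N.
  have := mxrank_mul_ker A B; rewrite rk_A_capkerB addn0 => <-.
  exact: mxrankM_maxr.
rewrite /row_full eqn_leq rank_leq_col /=.
have := mxrank_sum_cap (kermx A) B; rewrite rk_kerA_capB addn0 mxrank_ker => ->.
by have := rank_leq_row A; lia.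
Qed.

Section MsizeBounds.
Variables (n : nat) (R : comNzRingType).

Lemma msize_sum_le I (r : seq I) (F : I -> {mpoly R[n]}) b :
  (forall i, msize (F i) <= b)%N -> (msize (\sum_(i <- r) F i) <= b)%N.
Proof.
move=> Fb; apply: leq_trans (msize_sum _ _ _) _.
by elim/big_rec: _ => // i c _ cb; rewrite geq_max Fb.
Qed.

Lemma msize_mderiv i (p : {mpoly R[n]}) : (msize p^`M(i) <= (msize p).-1)%N.
Proof.
rewrite msizeE; apply/bigmax_leqP_seq => mon; rewrite mcoeff_msupp mcoeff_deriv => nz _.
have : (mon + U_(i))%MM \in msupp p.
  by rewrite mcoeff_msupp; apply: contraNneq nz => ->; rewrite mul0rn.
by move/msize_mdeg_lt; rewrite mdegD mdeg1; lia.
Qed.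

Lemma msize_mulX i (p : {mpoly R[n]}) : (msize ('X_i * p) <= (msize p).+1)%N.
Proof.
rewrite mulrC msizeE; apply/bigmax_leqP_seq => mon; rewrite (perm_mem (msuppMX _ _)).
by case/mapP => mon' /msize_mdeg_lt ? -> _; rewrite mdegD mdeg1; lia.
Qed.

End MsizeBounds.

Section FischerProduct.
Variable m : nat.
Local Notation PP := (Pol m).

Definition mfact (mon : 'X_{1..m + m}) : nat := (\prod_(i < m + m) (mon i)`!)%N.

Lemma mfact_gt0 mon : (0 < mfact mon)%N.
Proof. by rewrite prodn_gt0 // => i; rewrite fact_gt0. Qed.

Lemma mfactS i mon : mfact (U_(i) + mon)%MM = ((mon i).+1 * mfact mon)%N.
Proof.
rewrite /mfact (bigD1 i) //= [in RHS](bigD1 i) //= mnmDE mnm1E eqxx add1n factS.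
rewrite -mulnA; congr (_ * (_ * _))%N; apply: eq_bigr => j ji.
by rewrite mnmDE mnm1E eq_sym (negbTE ji) add0n.
Qed.

Lemma meval0E (P : PP) : meval (fun _ => 0) P = P@_0%MM.
Proof.
have prod0X (mon : 'X_{1..m + m}) :
    \prod_(i < m + m) (0 : Cplx) ^+ (mon i) = (mon == 0%MM)%:R.
  have [->|mon_nz] := eqVneq mon 0%MM; first by rewrite big1 // => i _; rewrite mnm0E.
  have [i nz] : exists i, mon i != 0%N.
    apply/existsP; apply: contraNT mon_nz => /existsPn mon0.
    by apply/eqP/mnmP => i; rewrite mnm0E; apply/eqP; rewrite -[_ == _]negbK mon0.
  by rewrite (bigD1 i) //= expr0n (negbTE nz) mul0r.
rewrite mevalE; under eq_bigr do rewrite prod0X.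
have [P0|P0] := boolP (0%MM \in msupp P).
  rewrite (bigD1_seq 0%MM) ?msupp_uniq //= eqxx mulr1 big1 ?addr0 // => mon.
  by move/negbTE ->; rewrite mulr0.
rewrite (memN_msupp_eq0 P0) big1_seq // => mon /andP[_ Pmon].
by case: eqP Pmon => [-> /(negP P0) []|_ _]; rewrite mulr0.
Qed.

Lemma fischerE (P Q : PP) :
  fischer P Q = \sum_(mon <- msupp P) (P@_mon)^* * (Q@_mon *+ mfact mon).
Proof.
rewrite /fischer raddf_sum /=; apply: eq_bigr => mon _.
rewrite mevalZ meval0E mcoeff_mderivm addm0; congr (_ * (_ *+ _)).
by apply: eq_bigr => i _; rewrite ffactnn.
Qed.

Lemma fischerwE k (P Q : PP) : (msize P <= k)%N ->
  fischer P Q = \sum_(mon : 'X_{1..(m + m) < k}) (P@_mon)^* * (Q@_mon *+ mfact mon).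
Proof.
move=> Pk; pose I : subFinType _ := 'X_{1..(m + m) < k}.
rewrite fischerE (big_mksub I) /=; first last.
- by move=> mon /msize_mdeg_lt/leq_trans/(_ Pk).
- exact: msupp_uniq.
by rewrite big_rmcond //= => mon /memN_msupp_eq0 ->; rewrite rmorph0 mul0r.
Qed.

Lemma fischerDl (P1 P2 Q : PP) : fischer (P1 + P2) Q = fischer P1 Q + fischer P2 Q.
Proof.
pose k := maxn (msize P1) (msize P2).
rewrite !(@fischerwE k) ?leq_maxl ?leq_maxr ?msizeD_le // -big_split /=.
by apply: eq_bigr => mon _; rewrite mcoeffD rmorphD mulrDl.
Qed.

Lemma fischerZl c (P Q : PP) : fischer (c *: P) Q = c^* * fischer P Q.
Proof.
rewrite !(@fischerwE (msize P)) ?msizeZ_le // mulr_sumr.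
by apply: eq_bigr => mon _; rewrite mcoeffZ rmorphM mulrA.
Qed.

Lemma fischerDr (P Q1 Q2 : PP) : fischer P (Q1 + Q2) = fischer P Q1 + fischer P Q2.
Proof.
rewrite !fischerE -big_split /=.
by apply: eq_bigr => mon _; rewrite mcoeffD mulrnDl mulrDr.
Qed.

Lemma fischerZr c (P Q : PP) : fischer P (c *: Q) = c * fischer P Q.
Proof.
rewrite !fischerE mulr_sumr.
by apply: eq_bigr => mon _; rewrite mcoeffZ -mulrnAr mulrCA.
Qed.

Lemma fischer0l (Q : PP) : fischer 0 Q = 0.
Proof. by rewrite fischerE msupp0 big_nil. Qed.

Lemma fischer0r (P : PP) : fischer P 0 = 0.
Proof. by rewrite fischerE big1 // => mon _; rewrite mcoeff0 mul0rn mulr0. Qed.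

Lemma fischer_suml I (r : seq I) (F : I -> PP) (Q : PP) :
  fischer (\sum_(i <- r) F i) Q = \sum_(i <- r) fischer (F i) Q.
Proof.
exact: (big_morph (fun P => fischer P Q) (fun P1 P2 => fischerDl P1 P2 Q) (fischer0l Q)).
Qed.

Lemma fischer_sumr I (r : seq I) (F : I -> PP) (P : PP) :
  fischer P (\sum_(i <- r) F i) = \sum_(i <- r) fischer P (F i).
Proof. exact: (big_morph (fischer P) (fischerDr P) (fischer0r P)). Qed.

Lemma fischerC (P Q : PP) : fischer Q P = (fischer P Q)^*.
Proof.
pose k := maxn (msize P) (msize Q).
rewrite !(@fischerwE k) ?leq_maxl ?leq_maxr // rmorph_sum /=.
apply: eq_bigr => mon _.
by rewrite rmorphM rmorphMn /= conjCK !mulrnAr mulrC.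
Qed.

Lemma fischer_ge0 (P : PP) : 0 <= fischer P P.
Proof.
rewrite fischerE; apply: sumr_ge0 => mon _.
by rewrite mulrnAr mulrC mulrn_wge0 // mul_conjC_ge0.
Qed.

Lemma fischer_eq0 (P : PP) : fischer P P = 0 -> P = 0.
Proof.
rewrite fischerE => /eqP; rewrite psumr_eq0 => [/allP Psupp|mon _]; last first.
  by rewrite mulrnAr mulrC mulrn_wge0 // mul_conjC_ge0.
apply/eqP; rewrite -msupp_eq0; apply/eqP.
case E: (msupp P) Psupp => [//|mon s] /(_ mon (mem_head _ _)) /=.
rewrite mulrnAr mulrC mulrn_eq0 mul_conjC_eq0 eqn0Ngt mfact_gt0 /=.
by have := mem_head mon s; rewrite -E mcoeff_msupp => /negbTE ->.
Qed.

Lemma fischerX a b : fischer ('X_[a] : PP) 'X_[b] = (a == b)%:R *+ mfact a.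
Proof. by rewrite fischerE msuppX big_seq1 !mcoeffX eqxx rmorph_nat mul1r eq_sym. Qed.

Lemma fischer_mulXX i a b :
  fischer ('X_i * 'X_[a] : PP) 'X_[b] = fischer 'X_[a] (('X_[b] : PP)^`M(i)).
Proof.
rewrite -mpolyXD mderivX fischerZr !fischerX.
have [<-|ne] := eqVneq (U_(i) + a)%MM b.
  rewrite [(U_(i) + a)%MM]addmC addmK eqxx mnmDE mnm1E eqxx addn1.
  by rewrite [(a + U_(i))%MM]addmC mfactS /= !mulr1n natrM.
have [ea|] := eqVneq a (b - U_(i))%MM; last by rewrite /= !mul0rn mulr0.
suff -> : b i = 0%N by rewrite mul0r mul0rn.
by apply/eqP; apply: contraNT ne => bi; rewrite ea addmC submK // lep1mP.
Qed.

Lemma fischer_mulX i (R Q : PP) : fischer ('X_i * R) Q = fischer R Q^`M(i).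
Proof.
rewrite [R]mpolyE [Q]mpolyE mulr_sumr !fischer_suml raddf_sum /=.
apply: eq_bigr => a _; rewrite !fischer_sumr; apply: eq_bigr => b _.
by rewrite -scalerAr !fischerZl mderivZ !fischerZr fischer_mulXX.
Qed.

End FischerProduct.

Section SquaredNorm.
Variables (m k : nat) (s : 'I_k -> 'I_(m + m)).
Local Notation PP := (Pol m).

Definition lap (P : PP) : PP := \sum_(j < k) (P^`M(s j))^`M(s j).
Definition sqnorm : PP := \sum_(j < k) 'X_(s j) ^+ 2.

Lemma lap_is_linear : linear lap.
Proof.
move=> c P Q; rewrite /lap scaler_sumr -big_split; apply: eq_bigr => j _.
by rewrite !linearP.
Qed.
HB.instance Definition _ := GRing.isLinear.Build Cplx PP PP *:%R lap lap_is_linear.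

Lemma fischer_sqnormM (R Q : PP) : fischer (sqnorm * R) Q = fischer R (lap Q).
Proof.
rewrite mulr_suml fischer_suml fischer_sumr; apply: eq_bigr => j _.
by rewrite expr2 -mulrA !fischer_mulX.
Qed.

Lemma msize_lap (P : PP) : (msize (lap P) <= (msize P).-2)%N.
Proof.
apply: msize_sum_le => j; apply: leq_trans (msize_mderiv _ _) _.
by rewrite -!subn1 leq_sub2r // subn1 msize_mderiv.
Qed.

Lemma msize_sqnormM (R : PP) : (msize (sqnorm * R) <= (msize R).+2)%N.
Proof.
rewrite mulr_suml; apply: msize_sum_le => j; rewrite expr2 -mulrA.
by apply: leq_trans (msize_mulX _ _) _; rewrite ltnS msize_mulX.
Qed.

End SquaredNorm.

Section Biharmonic.
Variable m : nat.
Local Notation PP := (Pol m).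

Lemma Lap_xE (P : PP) : Lap_x P = lap (@lshift m m) P. Proof. by []. Qed.
Lemma Lap_uE (P : PP) : Lap_u P = lap (@rshift m m) P. Proof. by []. Qed.

Lemma fischer_normx2M (R Q : PP) : fischer (normx2 m * R) Q = fischer R (Lap_x Q).
Proof. exact: fischer_sqnormM. Qed.

Lemma fischer_normu2M (R Q : PP) : fischer (normu2 m * R) Q = fischer R (Lap_u Q).
Proof. exact: fischer_sqnormM. Qed.

Lemma biharmonic0 : biharmonic (0 : PP).
Proof. by rewrite /biharmonic Lap_xE Lap_uE !linear0. Qed.

Lemma biharmonicD (P Q : PP) : biharmonic P -> biharmonic Q -> biharmonic (P + Q).
Proof.
rewrite /biharmonic !Lap_xE !Lap_uE => -[Px Pu] [Qx Qu].
by rewrite !linearD /= Px Pu Qx Qu addr0.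
Qed.

Lemma biharmonic_sqnormsD_eq0 (R1 R2 : PP) :
  biharmonic (normx2 m * R1 + normu2 m * R2) -> normx2 m * R1 + normu2 m * R2 = 0.
Proof.
move=> [Kx Ku]; apply: fischer_eq0.
by rewrite [in LHS]fischerDl fischer_normx2M fischer_normu2M Kx Ku !fischer0r addr0.
Qed.

Lemma sqnorms_lap_eq0_biharmonic (V : PP) :
  normx2 m * Lap_x V + normu2 m * Lap_u V = 0 -> biharmonic V.
Proof.
move=> K0; have : fischer (Lap_x V) (Lap_x V) + fischer (Lap_u V) (Lap_u V) = 0.
  by rewrite -fischer_normx2M -fischer_normu2M -fischerDl K0 fischer0l.
move/eqP; rewrite paddr_eq0 ?fischer_ge0 //.
by case/andP => /eqP/fischer_eq0 Vx /eqP/fischer_eq0 Vu.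
Qed.

End Biharmonic.

Section Coordinates.
Variables (m b : nat).
Local Notation PP := (Pol m).
Local Notation monb := (bmultinom (m + m) b).

Definition mpoly_of_row (v : 'rV[Cplx]_#|{: monb}|) : PP :=
  \sum_(mon : monb) v 0 (enum_rank mon) *: 'X_[val mon].

Definition row_of_mpoly (F : PP) : 'rV[Cplx]_#|{: monb}| :=
  \row_j F@_(val (enum_val j)).

Lemma mpoly_of_row_is_linear : linear mpoly_of_row.
Proof.
move=> c u v; rewrite /mpoly_of_row scaler_sumr -big_split; apply: eq_bigr => mon _.
by rewrite !mxE scalerDl scalerA.
Qed.
HB.instance Definition _ :=
  GRing.isLinear.Build Cplx _ PP *:%R mpoly_of_row mpoly_of_row_is_linear.

Lemma row_of_mpoly_is_linear : linear row_of_mpoly.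
Proof. by move=> c P Q; apply/rowP => j; rewrite !mxE mcoeffD mcoeffZ. Qed.
HB.instance Definition _ :=
  GRing.isLinear.Build Cplx PP _ *:%R row_of_mpoly row_of_mpoly_is_linear.

Lemma msize_mpoly_of_row v : (msize (mpoly_of_row v) <= b)%N.
Proof.
apply: msize_sum_le => mon; apply: leq_trans (msizeZ_le _ _) _.
by rewrite msizeX; exact: bmdeg.
Qed.

Lemma row_of_mpolyK (F : PP) : (msize F <= b)%N -> mpoly_of_row (row_of_mpoly F) = F.
Proof.
move=> Fb; rewrite [RHS](mpolywE Fb); apply: eq_bigr => mon _.
by rewrite mxE enum_rankK.
Qed.

Lemma row_of_mpoly_eq0 (F : PP) : (msize F <= b)%N -> row_of_mpoly F = 0 -> F = 0.
Proof. by move=> Fb F0; rewrite -(row_of_mpolyK Fb) F0 linear0. Qed.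

End Coordinates.

Section HarmonicDecomposition.
Variables (m d : nat).
Local Notation PP := (Pol m).
Local Notation nF := #|{: bmultinom (m + m) d.+2}|.
Local Notation nR := #|{: bmultinom (m + m) d}|.

Definition laps_row (v : 'rV[Cplx]_nF) : 'rV[Cplx]_(nR + nR) :=
  row_mx (row_of_mpoly d (Lap_x (mpoly_of_row v)))
         (row_of_mpoly d (Lap_u (mpoly_of_row v))).

Definition sqnorms_row (r : 'rV[Cplx]_(nR + nR)) : 'rV[Cplx]_nF :=
  row_of_mpoly d.+2
    (normx2 m * mpoly_of_row (lsubmx r) + normu2 m * mpoly_of_row (rsubmx r)).

Lemma laps_row_is_linear : linear laps_row.
Proof.
move=> c u v; rewrite /laps_row !Lap_xE !Lap_uE !linearP /=.
by rewrite scale_row_mx add_row_mx.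
Qed.
HB.instance Definition _ :=
  GRing.isLinear.Build Cplx _ _ *:%R laps_row laps_row_is_linear.

Lemma sqnorms_row_is_linear : linear sqnorms_row.
Proof.
move=> c u v; rewrite /sqnorms_row !linearP /= !mulrDr -!scalerAr addrACA.
by rewrite -scalerDr linearP.
Qed.
HB.instance Definition _ :=
  GRing.isLinear.Build Cplx _ _ *:%R sqnorms_row sqnorms_row_is_linear.

Lemma msize_sqnormsD (R1 R2 : PP) : (msize R1 <= d)%N -> (msize R2 <= d)%N ->
  (msize (normx2 m * R1 + normu2 m * R2) <= d.+2)%N.
Proof.
move=> R1d R2d; apply: leq_trans (msizeD_le _ _) _; rewrite geq_max.
by rewrite !(leq_trans (msize_sqnormM _ _)).
Qed.

Lemma msize_laps (V : PP) : (msize V <= d.+2)%N ->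
  (msize (Lap_x V) <= d)%N /\ (msize (Lap_u V) <= d)%N.
Proof.
by move=> Vd; split; apply: leq_trans (msize_lap _ _) _; rewrite -subn2 leq_subLR add2n.
Qed.

Lemma laps_row_eq0 v : laps_row v = 0 -> biharmonic (mpoly_of_row v).
Proof.
have [Vx Vu] := msize_laps (msize_mpoly_of_row v).
move/eqP; rewrite -row_mx0 => /eqP /eq_row_mx [].
by move=> /(row_of_mpoly_eq0 Vx) + /(row_of_mpoly_eq0 Vu).
Qed.

Lemma kermx_laps_cap_sqnorms (v : 'rV[Cplx]_nF) :
  v *m lin1_mx laps_row = 0 -> (v <= lin1_mx sqnorms_row)%MS -> v = 0.
Proof.
move=> + /submxP [r vr]; rewrite vr !mul_rV_lin1 /=.
have Kd := msize_sqnormsD (msize_mpoly_of_row (lsubmx r))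
                          (msize_mpoly_of_row (rsubmx r)).
move/laps_row_eq0; rewrite /sqnorms_row row_of_mpolyK // => /biharmonic_sqnormsD_eq0 ->.
exact: linear0.
Qed.

Lemma kermx_sqnorms_cap_laps (w : 'rV[Cplx]_(nR + nR)) :
  w *m lin1_mx sqnorms_row = 0 -> (w <= lin1_mx laps_row)%MS -> w = 0.
Proof.
move=> + /submxP [v wv]; rewrite wv !mul_rV_lin1 /=.
have [Vx Vu] := msize_laps (msize_mpoly_of_row v).
rewrite /sqnorms_row /laps_row row_mxKl row_mxKr !row_of_mpolyK //.
move=> /(row_of_mpoly_eq0 (msize_sqnormsD Vx Vu)) /sqnorms_lap_eq0_biharmonic [-> ->].
by rewrite !linear0 row_mx0.
Qed.

Lemma biharmonic_sqnorms_decomp (F : PP) : (msize F <= d.+2)%N ->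
  exists H R1 R2, [/\ biharmonic H, F = H + normx2 m * R1 + normu2 m * R2,
                      (msize R1 <= d)%N & (msize R2 <= d)%N].
Proof.
move=> Fd; have := row_full_kermx_adds kermx_laps_cap_sqnorms kermx_sqnorms_cap_laps.
move=> /(submx_full (row_of_mpoly d.+2 F)) /sub_addsmxP [[u r] /= Fur].
exists (mpoly_of_row (u *m kermx (lin1_mx laps_row))).
exists (mpoly_of_row (lsubmx r)), (mpoly_of_row (rsubmx r)).
split; rewrite ?msize_mpoly_of_row //.
  by apply: laps_row_eq0; rewrite -[laps_row _]mul_rV_lin1 -mulmxA mulmx_ker mulmx0.
rewrite -addrA -[LHS](row_of_mpolyK Fd) Fur linearD /=.
by rewrite mul_rV_lin1 /= row_of_mpolyK // msize_sqnormsD ?msize_mpoly_of_row.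
Qed.

End HarmonicDecomposition.

Section FischerDecomposition.
Variable m : nat.
Local Notation PP := (Pol m).

Definition fischer_sum A B (Hf : nat -> nat -> PP) : PP :=
  \sum_(a < A) \sum_(b < B) normx2 m ^+ a * normu2 m ^+ b * Hf a b.

(* Unlike [fischer_decomp], the expansion holds on every large enough range of
   summation, so that two expansions can be added termwise. *)
Definition fischer_expansion (F : PP) := exists N (Hf : nat -> nat -> PP),
  (forall a b, biharmonic (Hf a b)) /\
  forall A B, (N < A)%N -> (N < B)%N -> F = fischer_sum A B Hf.

Lemma fischer_expansion_biharmonic (H : PP) : biharmonic H -> fischer_expansion H.
Proof.
move=> bH; exists 0%N, (fun a b => if (a == 0%N) && (b == 0%N) then H else 0).
split=> [a b|[//|A] [//|B] _ _]; first by case: ifP => _ //; exact: biharmonic0.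
rewrite /fischer_sum big_ord_recl big_ord_recl /= !expr0 !mul1r.
rewrite big1 ?addr0 => [|j _]; last by rewrite mulr0.
by rewrite big1 ?addr0 // => i _; rewrite big1 // => j _; rewrite mulr0.
Qed.

Lemma fischer_expansionD (P Q : PP) :
  fischer_expansion P -> fischer_expansion Q -> fischer_expansion (P + Q).
Proof.
move=> [N1 [H1 [bH1 P_eq]]] [N2 [H2 [bH2 Q_eq]]].
exists (maxn N1 N2), (fun a b => H1 a b + H2 a b); split=> [a b|A B].
  exact: biharmonicD.
rewrite !gtn_max => /andP[A1 A2] /andP[B1 B2]; rewrite (P_eq A B) // (Q_eq A B) //.
rewrite /fischer_sum -big_split; apply: eq_bigr => a _; rewrite -big_split.
by apply: eq_bigr => b _; rewrite mulrDr.
Qed.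

Lemma fischer_expansion_normx2M (R : PP) :
  fischer_expansion R -> fischer_expansion (normx2 m * R).
Proof.
move=> [N [Hf [bHf R_eq]]].
exists N.+1, (fun a b => if a is a'.+1 then Hf a' b else 0).
split=> [[|a] b|[//|A] B NA NB].
- exact: biharmonic0.
- exact: bHf.
rewrite /fischer_sum big_ord_recl /= big1 ?add0r => [|j _]; last by rewrite mulr0.
rewrite (R_eq A B) ?(ltn_trans _ NB) // mulr_sumr; apply: eq_bigr => a _.
by rewrite mulr_sumr; apply: eq_bigr => b _; rewrite exprS !mulrA.
Qed.

Lemma fischer_expansion_normu2M (R : PP) :
  fischer_expansion R -> fischer_expansion (normu2 m * R).
Proof.
move=> [N [Hf [bHf R_eq]]].
exists N.+1, (fun a b => if b is b'.+1 then Hf a b' else 0).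
split=> [a [|b]|A [//|B] NA NB].
- exact: biharmonic0.
- exact: bHf.
rewrite (R_eq A B) ?(ltn_trans _ NA) // /fischer_sum mulr_sumr; apply: eq_bigr => a _.
rewrite big_ord_recl /= mulr0 add0r mulr_sumr; apply: eq_bigr => b _.
by rewrite exprS !mulrA [normu2 m * _]mulrC.
Qed.

Lemma fischer_expansion_all (F : PP) : fischer_expansion F.
Proof.
elim: (msize F).+1 {-2}F (ltnSn (msize F)) => [//|k IH] {}F Fk.
have [->|F0] := eqVneq F 0; first exact/fischer_expansion_biharmonic/biharmonic0.
have Fpos : (0 < msize F)%N by rewrite lt0n msize_poly_eq0.
have Fd : (msize F <= (msize F).-2.+2)%N by case: (msize F) => [|[]].
have [H [R1 [R2 [bH F_eq R1d R2d]]]] := biharmonic_sqnorms_decomp Fd.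
have ltRk R : (msize R <= (msize F).-2)%N -> (msize R < k)%N.
  by move: Fk Fpos; rewrite -!subn1; lia.
rewrite F_eq; apply: fischer_expansionD; first apply: fischer_expansionD.
- exact: fischer_expansion_biharmonic.
- exact/fischer_expansion_normx2M/IH/ltRk.
- exact/fischer_expansion_normu2M/IH/ltRk.
Qed.

Lemma pi_sP (F : PP) : fischer_decomp F (pi_s F).
Proof.
apply: epsilon_spec; have [N [Hf [bHf F_eq]]] := fischer_expansion_all F.
by exists (Hf 0%N 0%N), N, Hf; split; last split; last exact: F_eq.
Qed.

Lemma fischer_decomp_fischer (F H Q : PP) : fischer_decomp F H -> biharmonic Q ->
  fischer F Q = fischer H Q.
Proof.
move=> [N [Hf [_ [-> ->]]]] [Qx Qu].
rewrite fischer_suml big_ord_recl fischer_suml big_ord_recl /=.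
rewrite [X in _ + X + _ = _]big1 ?addr0 => [|j _]; last first.
  by rewrite expr0 mul1r exprS -mulrA fischer_normu2M Qu fischer0r.
rewrite big1 ?addr0 ?expr0 ?mul1r // => i _; rewrite fischer_suml big1 // => j _.
by rewrite exprS -!mulrA fischer_normx2M Qx fischer0r.
Qed.

Lemma fischer_pi_sl (F Q : PP) : biharmonic Q -> fischer (pi_s F) Q = fischer F Q.
Proof. by move=> bQ; rewrite (fischer_decomp_fischer (pi_sP F) bQ). Qed.

Lemma fischer_pi_sr (P F : PP) : biharmonic P -> fischer P (pi_s F) = fischer P F.
Proof. by move=> bP; rewrite fischerC fischer_pi_sl // -fischerC. Qed.

Lemma fischer_C_opl (P Q : PP) : biharmonic P -> biharmonic Q ->
  fischer (C_op P) Q = fischer P (A_op Q).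
Proof.
move=> bP bQ; rewrite fischer_pi_sl // fischer_pi_sr // /mul_ux /ux mulr_suml.
rewrite fischer_suml fischer_sumr; apply: eq_bigr => j _.
by rewrite -mulrA !fischer_mulX mderiv_comm.
Qed.

Lemma fischer_S_ul (P Q : PP) : biharmonic P -> biharmonic Q ->
  fischer (S_u P) Q = fischer P (S_x Q).
Proof.
move=> bP bQ; rewrite fischer_pi_sl // fischer_pi_sr //.
rewrite fischer_suml fischer_sumr; apply: eq_bigr => j _.
by rewrite fischer_mulX [RHS]fischerC fischer_mulX -fischerC.
Qed.

End FischerDecomposition.

Theorem proposition6p1 (m : nat) (hm : (4 < m)%N) (P Q : Pol m) :
  biharmonic P -> biharmonic Q ->
  [/\ fischer (C_op P) Q = fischer P (A_op Q),
      fischer (A_op P) Q = fischer P (C_op Q),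
      fischer (S_u P) Q = fischer P (S_x Q)
    & fischer (S_x P) Q = fischer P (S_u Q)].
Proof.
move=> bP bQ; split; rewrite ?fischer_C_opl ?fischer_S_ul //.
- by rewrite fischerC -fischer_C_opl // -fischerC.
- by rewrite fischerC -fischer_S_ul // -fischerC.
Qed.
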